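(* Let $\lambda,\mu,\nu\in\mathcal{P}_k^+$. (i) The coefficient $f^\nu_{\lambda\mu}$ equals the cardinality of $\{(w,w')\in S^\lambda\times S^\mu:\lambda\circ w+\mu\circ w'=\nu\}$. (ii) $\chi_{\lambda/\mu}$ equals the cardinality of $\{w\in S^\mu:\mu_{w(i)}\le\lambda_i\text{ for all }i\in[k]\}$.
   Context: $[k]=\{1,\dots,k\}$. $\mathcal{P}_k^+$ is the set of $\lambda\in\mathbb{Z}^k$ with $\lambda_1\ge\cdots\ge\lambda_k\ge0$, identified with partitions having at most $k$ nonzero parts. $f^\nu_{\lambda\mu}$ is defined by $m_\lambda m_\mu=\sum_\nu f^\nu_{\lambda\mu}m_\nu$ in the ring of symmetric functions ($m_\lambda$ the monomial symmetric functions). For $\lambda\in\mathbb{Z}^k$ and $w\in S_k$, $\lambda\circ w=(\lambda_{w(1)},\dots,\lambda_{w(k)})$; $S_\lambda\subset S_k$ is the stabiliser of $\lambda$, and $S^\lambda$ is the set of minimal length (with respect to the simple transpositions) representatives of the right cosets $S_\lambda\backslash S_k$. For partitions $\lambda,\mu$ with conjugates $\lambda',\mu'$, $\chi_{\lambda/\mu}=\prod_{i\ge1}\binom{\lambda'_i-\mu'_{i+1}}{\mu'_i-\mu'_{i+1}}$ if $\mu\subset\lambda$ and $0$ otherwise. *)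

From HB Require Import structures.
From mathcomp Require Import all_boot all_order all_algebra all_fingroup.
From mathcomp Require Import mpoly.
Set Implicit Arguments. Unset Strict Implicit. Unset Printing Implicit Defensive.
Import GRing.Theory.

(* A vector lambda in Z^k (with nonnegative entries) is a finite function 'I_k -> nat. *)
Notation vec k := {ffun 'I_k -> nat}.

Definition dominant k (l : vec k) : Prop :=
  forall i j : 'I_k, (i <= j)%N -> (l j <= l i)%N.

Definition actv k (l : vec k) (w : {perm 'I_k}) : vec k := [ffun i => l (w i)].

(* the simple transposition s_j = (j j+1), used for j : 'I_k with j.+1 < k *)
Definition stransp k (j : 'I_k) : {perm 'I_k} := tperm j (insubd j j.+1).

Definition word_len k (w : {perm 'I_k}) (n : nat) : Prop :=
  exists s : seq 'I_k, [/\ size s = n, all (fun j : 'I_k => j.+1 < k)%N s &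
                          w = (\prod_(j <- s) stransp j)%g].

Definition len_le k (w v : {perm 'I_k}) : Prop :=
  forall n, word_len v n -> exists2 m, (m <= n)%N & word_len w m.

Definition stab k (l : vec k) (u : {perm 'I_k}) : Prop := actv l u = l.

(* the right coset S_lambda w = { u o w : u in S_lambda }; in mathcomp (w * u)%g
   is the map i |-> u (w i), i.e. the composition u o w *)
Definition in_rcoset k (l : vec k) (w v : {perm 'I_k}) : Prop :=
  exists2 u, stab l u & v = (w * u)%g.

Definition minrep k (l : vec k) (w : {perm 'I_k}) : Prop :=
  forall v, in_rcoset l w v -> len_le w v.

Definition card_is (T : finType) (P : T -> Prop) (c : nat) : Prop :=
  exists A : {set T}, (forall x, x \in A <-> P x) /\ #|A| = c.

Definition pad k n (l : vec k) : 'I_n -> nat :=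
  fun i => oapp l 0%N (insub (val i) : option 'I_k).
Arguments pad {k} n l _.

Definition msymm n (a : 'I_n -> nat) : {mpoly int[n]} :=
  (\sum_(m <- undup [seq [multinom a (s i) | i < n] | s : {perm 'I_n} <- enum {perm 'I_n}])
     'X_[m])%R.

(* f^nu_{lambda mu} computed in Lambda_n (n >= k): coefficient of m_nu in
   m_lambda m_mu, i.e. the coefficient of the monomial x^nu *)
Definition fcoef k n (l m v : vec k) : int :=
  ((msymm (pad n l) * msymm (pad n m)) @_ [multinom pad n v i | i < n])%R.

Definition conjp k (l : vec k) (i : nat) : nat := #|[set j : 'I_k | (i <= l j)%N]|.

Definition subpart k (m l : vec k) : bool := [forall j, (m j <= l j)%N].

(* Factors with i > lambda_1 are binom(0,0)=1 when mu ⊂ lambda,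
   so the product is taken over 1 <= i <= max_j lambda_j. *)
Definition chi k (l m : vec k) : nat :=
  if subpart m l then
    (\prod_(1 <= i < (\max_(j : 'I_k) l j).+1)
       'C(conjp l i - conjp m i.+1, conjp m i - conjp m i.+1))%N
  else 0%N.

(* The length of w is its number of inversions, and when l is dominant all
   elements of a coset S_l w have the same inversions between different levels
   of l o w.  Hence w is a minimal representative iff it has no inversion inside
   a level of l o w ("canonical"); every coset has exactly one canonical
   element, so w |-> l o w identifies S^l with the rearrangements of l.
   (i) As nu vanishes beyond the first k variables, only monomials of m_l and
   m_m supported on them contribute to the coefficient of x^nu, and these are
   the x^(l o w), x^(m o w') with w, w' canonical.
   (ii) A rearrangement a of m with a <= l is determined by a - 1 and its
   support, which lies between supp (a - 1) and {j | 1 <= l j} and has m'_1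
   elements; this gives the factor C(l'_1 - m'_2, m'_1 - m'_2), and induction
   on max l (lowering all entries by one) gives chi_{l/m}. *)

From HB Require Import structures.
From mathcomp Require Import all_boot all_order all_algebra all_fingroup.
From mathcomp Require Import mpoly.
From mathcomp Require Import zify.
Set Implicit Arguments. Unset Strict Implicit. Unset Printing Implicit Defensive.

Import GRing.Theory.

Lemma card_subsets_between (T : finType) (A B : {set T}) m :
  A \subset B -> #|A| <= m ->
  #|[set S : {set T} | [&& A \subset S, S \subset B & #|S| == m]]| =
  'C(#|B| - #|A|, m - #|A|).
Proof.
move=> AB Am; rewrite -cardsDS // -cards_draws.
rewrite -(@card_in_imset _ _ (fun S => S :\: A)) => [|S1 S2]; last first.
  rewrite !inE => /and3P[AS1 _ _] /and3P[AS2 _ _] /setP E.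
  apply/setP => x; have := E x; rewrite !inE.
  by case: (boolP (x \in A)) => [xA _|_ /=]; rewrite ?(subsetP AS1 _ xA) ?(subsetP AS2 _ xA).
apply: eq_card => X; rewrite inE; apply/imsetP/andP => [[S] | [/subsetDP[XB XA] /eqP cX]].
  rewrite inE => /and3P[AS SB /eqP cS] ->.
  by rewrite setSD // cardsDS // cS.
exists (X :|: A); last by rewrite setDUl setDv setU0; apply/esym/setDidPl.
by rewrite inE subsetUr subUset XB AB cardsU (disjoint_setI0 XA) cards0 subn0 cX subnK ?eqxx.
Qed.

Lemma card_set_count (T : finType) (P : pred T) : #|[set x | P x]| = count P (enum T).
Proof.
rewrite cardsE cardE /enum_mem size_filter count_filter.
by apply: eq_count => x; rewrite !inE andbT.
Qed.

Lemma count_leq_split x (s : seq nat) :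
  count (leq x) s = count (pred1 x) s + count (leq x.+1) s.
Proof. by elim: s => //= y s ->; case: ltngtP => /=; lia. Qed.

(** * Minimal coset representatives *)

Section CanonicalRepresentatives.
Variable k : nat.
Implicit Types (f : 'I_k -> nat) (i j x y : 'I_k) (u v w : {perm 'I_k}).

Definition canon f w : bool :=
  [forall i : 'I_k, forall j : 'I_k, (i < j) && (f (w i) == f (w j)) ==> (w i < w j)].

Lemma canonP f w :
  reflect (forall i j, i < j -> f (w i) = f (w j) -> w i < w j) (canon f w).
Proof.
apply: (iffP forallP) => [H i j ij E|H i].
  by have /forallP/(_ j)/implyP := H i; apply; rewrite ij E eqxx.
by apply/forallP => j; apply/implyP => /andP[ij /eqP]; apply: H.
Qed.

Lemma canon_stab_eq1 f u : canon f u -> (forall x, f (u x) = f x) -> u = 1%g.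
Proof.
move=> /canonP incr fu; apply/permP => x; rewrite perm1.
have [n] := ubnP x; elim: n x => // n IH x; rewrite ltnS => xn.
have fixed y : y < x -> u y = y by move=> yx; apply: IH; apply: leq_trans xn.
case: (ltngtP (u x) x) => [ux_lt|ux_gt|/val_inj //].
  by have /perm_inj E := fixed _ ux_lt; rewrite E ltnn in ux_lt.
set z := (u^-1)%g x; have uz : u z = x by rewrite permKV.
case: (ltngtP z x) => [zx|xz|/val_inj zx].
- by move: (fixed _ zx); rewrite uz => E; rewrite E ltnn in zx.
- have fxz : f x = f z by rewrite -{1}uz fu.
  by have := incr _ _ xz; rewrite !fu uz => /(_ fxz); rewrite ltnNge ltnW.
- by move: uz; rewrite zx.
Qed.

Lemma canon_uniq f v w :
  canon f v -> canon f w -> (forall i, f (v i) = f (w i)) -> v = w.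
Proof.
move=> /canonP cv /canonP cw E.
suff: (v^-1 * w)%g = 1%g by move/eqP; rewrite -eq_mulVg1 => /eqP.
apply: (@canon_stab_eq1 f); last by move=> x; rewrite permM -E permKV.
apply/canonP => x y xy; rewrite !permM -!E !permKV => fxy.
set i := (v^-1)%g x; set j := (v^-1)%g y.
have [vi vj] : v i = x /\ v j = y by rewrite !permKV.
case: (ltngtP i j) => [ij|ji|/val_inj ij].
- by apply: cw => //; rewrite -!E vi vj.
- by have := cv _ _ ji; rewrite vi vj => /(_ (esym fxy)); rewrite ltnNge ltnW.
- by rewrite -vi -vj ij ltnn in xy.
Qed.

(* A maximiser of sum_i i * w0 i over the w0 with f o w0 = f o w is canonical:
   swapping an out-of-order pair on a level of f o w0 would increase the sum. *)
Lemma canon_exists f w : exists2 w0, canon f w0 & forall i, f (w0 i) = f (w i).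
Proof.
pose same v := [forall i, f (v i) == f (w i)].
pose weight v := \sum_(i : 'I_k) i * v i.
have [w0 /forallP same0 max0] := @arg_maxnP _ w same weight (introT forallP (fun i => eqxx _)).
exists w0 => [|i]; last exact/eqP.
apply/canonP => i j ij E; rewrite ltnNge leq_eqVlt.
apply/negP => /orP[/eqP/val_inj/perm_inj ji|ji]; first by rewrite ji ltnn in ij.
have ne : i != j by rewrite neq_ltn ij.
have same1 : same (tperm i j * w0)%g.
  apply/forallP => x; rewrite permM.
  case: tpermP => [->|->|_ _]; last exact: same0.
    by rewrite -E same0.
  by rewrite E same0.
have weightE v : weight v =
    i * v i + (j * v j + \sum_(x | (x != i) && (x != j)) x * v x).
  by rewrite /weight (bigD1 i) //= (bigD1 j) 1?eq_sym.
have swapE : weight (tperm i j * w0)%g =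
    i * w0 j + (j * w0 i + \sum_(x | (x != i) && (x != j)) x * w0 x).
  rewrite weightE !permM tpermL tpermR; congr (_ + (_ + _)).
  by apply: eq_bigr => x /andP[xi xj]; rewrite permM tpermD // eq_sym.
by have := max0 _ same1; rewrite swapE weightE; nia.
Qed.

End CanonicalRepresentatives.

Section Inversions.
Variable k : nat.
Implicit Types (a b x : 'I_k) (v w : {perm 'I_k}).

Definition inversions w : {set 'I_k * 'I_k} :=
  [set p : 'I_k * 'I_k | (p.1 < p.2) && (w p.2 < w p.1)].

Definition ninv w := #|inversions w|.

Lemma incr_perm_eq1 w : (forall a b, a < b -> w a < w b) -> w = 1%g.
Proof.
move=> incr; apply: (@canon_stab_eq1 _ (fun _ => 0)) => //.
by apply/canonP => a b ab _; apply: incr.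
Qed.

Lemma ninv1 : ninv 1 = 0.
Proof. by apply: eq_card0 => p; rewrite inE !perm1; case: ltngtP. Qed.

Section SimpleTransposition.
Variable x : 'I_k.
Hypothesis xk : x.+1 < k.
Local Notation y := (insubd x x.+1 : 'I_k).
Local Notation s := (stransp x).

Lemma val_insubd_succ : val y = x.+1.
Proof. by rewrite val_insubd xk. Qed.

Lemma val_stransp a :
  val (s a) = if val a == x then x.+1 else if val a == x.+1 then val x else val a.
Proof.
have yx : (y == x) = false.
  by apply/negbTE; rewrite -(inj_eq val_inj) val_insubd_succ neq_ltn ltnSn orbT.
rewrite -val_insubd_succ /stransp !(inj_eq val_inj).
by case: tpermP => [->|->|/eqP ax /eqP ay]; rewrite ?eqxx ?yx ?(negbTE ax) ?(negbTE ay).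
Qed.

Lemma stransp_ltn a b : a < b -> (a, b) != (x, y) -> s a < s b.
Proof.
rewrite xpair_eqE -!(inj_eq val_inj) val_insubd_succ !val_stransp /=.
by do ![case: eqP] => /=; lia.
Qed.

Lemma card_inversions_stransp w :
  #|inversions w :\ (x, y)| <= #|inversions (s * w) :\ (x, y)|.
Proof.
have sK : involutive s by move=> z; rewrite tpermK.
pose swap (p : 'I_k * 'I_k) := (s p.1, s p.2).
have swapK : involutive swap by move=> [a b]; rewrite /swap /= !sK.
rewrite -(card_imset _ (inv_inj swapK)); apply/subset_leq_card/subsetP.
move=> q /imsetP[[a b] /setD1P[ne_xy]]; rewrite inE /= => /andP[ab wab] ->.
rewrite !inE /= !permM !sK wab andbT.
apply/andP; split; last exact: stransp_ltn.
apply: contraTneq ab => /(congr1 swap); rewrite /swap /= !sK => -[-> ->].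
by rewrite /stransp tpermL tpermR -leqNgt val_insubd_succ.
Qed.

Lemma stransp_mulK w : (s * (s * w))%g = w.
Proof. by rewrite mulgA tperm2 mul1g. Qed.

Lemma ninv_stransp_le w : ninv (s * w) <= (ninv w).+1.
Proof.
have := card_inversions_stransp (s * w); rewrite stransp_mulK /ninv.
rewrite (cardsD1 (x, y) (inversions (s * w))).
have : #|inversions w :\ (x, y)| <= #|inversions w| by apply/subset_leq_card/subD1set.
by case: ((x, y) \in _) => [|] le_w le_sw; rewrite ?add1n ?add0n ?ltnS;
  [|apply: leqW]; apply: leq_trans le_w.
Qed.

Lemma ninv_stransp_lt w : w y < w x -> ninv (s * w) < ninv w.
Proof.
move=> wyx; have := card_inversions_stransp (s * w); rewrite stransp_mulK /ninv.
have xy_w : (x, y) \in inversions w by rewrite inE /= val_insubd_succ ltnSn.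
have xy_sw : (x, y) \notin inversions (s * w).
  by rewrite inE /= !permM /stransp tpermL tpermR [w x < _]ltnNge (ltnW wyx) andbF.
by rewrite (cardsD1 (x, y) (inversions w)) (cardsD1 (x, y) (inversions _)) xy_w (negbTE xy_sw).
Qed.

End SimpleTransposition.

Lemma word_len_ninv w n : word_len w n -> ninv w <= n.
Proof.
case=> s [<- /allP s_ok ->] {w n}.
elim: s s_ok => [|x s IH] s_ok /=; first by rewrite big_nil ninv1.
rewrite big_cons; apply: leq_trans (ninv_stransp_le _ _) _.
  by apply: s_ok; rewrite mem_head.
by rewrite ltnS; apply: IH => j js; apply: s_ok; rewrite inE js orbT.
Qed.

Lemma ascents_incr w : (forall x, x.+1 < k -> w x < w (insubd x x.+1)) ->
  forall a b, a < b -> w a < w b.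
Proof.
move=> asc a b ab; pose g n := w (insubd a n) : nat.
have [ak bk] : a < k /\ b < k by [].
have := @homo_ltn_in _ [pred n | n < k] g (fun m n => m < n) ltn_trans _ _ a b ak bk ab.
rewrite /g !valKd; apply=> [i j ik jk c /andP[_ cj] | i ik i1k]; first exact: ltn_trans cj jk.
rewrite !inE in ik i1k.
have vi : insubd a i = i :> nat by rewrite val_insubd ik.
have -> : insubd a i.+1 = insubd (insubd a i) (insubd a i).+1.
  by apply: val_inj; rewrite val_insubd i1k val_insubd vi i1k.
by apply: asc; rewrite vi.
Qed.

Lemma word_len_exists w : exists2 m, m <= ninv w & word_len w m.
Proof.
have [n] := ubnP (ninv w); elim: n w => // n IH w; rewrite ltnS => wn.
case: (pickP [pred x : 'I_k | (x.+1 < k) && (w (insubd x x.+1) < w x)]).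
  move=> x /andP[xk desc]; have lt_sw := ninv_stransp_lt xk desc.
  have [m le_m [s [sz s_ok sE]]] := IH _ (leq_trans lt_sw wn).
  exists m.+1; first exact: leq_ltn_trans le_m lt_sw.
  by exists (x :: s); rewrite /= sz xk s_ok big_cons -sE stransp_mulK.
move=> no_desc; have -> : w = 1%g.
  apply/incr_perm_eq1/ascents_incr => x xk; have := no_desc x.
  rewrite /= xk /= => /negbT; rewrite -leqNgt ltn_neqAle => ->.
  rewrite andbT (inj_eq val_inj) (inj_eq perm_inj).
  by rewrite -(inj_eq val_inj) val_insubd xk neq_ltn ltnSn.
by exists 0 => //; exists [::]; rewrite big_nil.
Qed.

Lemma len_leP v w : len_le v w <-> ninv v <= ninv w.
Proof.
split=> [le_vw | le_vw n wn].
  have [n le_n wn] := word_len_exists w; have [m le_mn vm] := le_vw n wn.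
  exact: leq_trans (word_len_ninv vm) (leq_trans le_mn le_n).
have [m le_m vm] := word_len_exists v.
by exists m => //; apply: leq_trans le_m (leq_trans le_vw (word_len_ninv wn)).
Qed.

End Inversions.

Section MinimalRepresentatives.
Variable k : nat.
Implicit Types (f : 'I_k -> nat) (l : vec k) (a b : 'I_k) (v w : {perm 'I_k}).

Definition level_pairs f w : {set 'I_k * 'I_k} :=
  [set p | f (w p.1) == f (w p.2)].

Lemma canonE f w : canon f w = (inversions w :&: level_pairs f w == set0).
Proof.
apply/canonP/eqP => [incr | no_inv a b ab E].
  apply/setP => -[a b]; rewrite !inE /=; apply/negbTE/negP.
  by case/andP=> /andP[ab wba] /eqP/(incr _ _ ab); rewrite ltnNge (ltnW wba).
move/setP: no_inv => /(_ (a, b)); rewrite !inE /= ab E eqxx andbT => /negbT.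
rewrite -leqNgt leq_eqVlt (inj_eq val_inj) (inj_eq perm_inj).
by case/orP=> // /eqP eab; rewrite eab ltnn in ab.
Qed.

Lemma in_rcosetP l w v : in_rcoset l w v <-> forall i, l (v i) = l (w i).
Proof.
split=> [[u /ffunP stab_u ->] i | E]; first by rewrite permM -[RHS](stab_u) ffunE.
exists (w^-1 * v)%g; last by rewrite mulKVg.
by apply/ffunP => i; rewrite ffunE permM E permKV.
Qed.

Lemma dominant_ltn l a b : dominant l -> l a != l b -> (b < a) = (l a < l b).
Proof.
move=> dom_l; case: ltngtP => [ba|ab|/val_inj ->]; last by rewrite eqxx.
  by have := dom_l _ _ (ltnW ba); rewrite leq_eqVlt eq_sym => /orP[->|].
by have := dom_l _ _ (ltnW ab); rewrite ltnNge => ->.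
Qed.

(* Under dominance, whether a pair on two different levels is an inversion only
   depends on the values of l o w at that pair. *)
Lemma inversions_off_level l v w : dominant l -> (forall i, l (v i) = l (w i)) ->
  inversions v :\: level_pairs l w = inversions w :\: level_pairs l w.
Proof.
move=> dom_l E; apply/setP => -[a b]; rewrite !inE /=.
case: (boolP (l (w a) == l (w b))) => //= ne.
by rewrite (@dominant_ltn l (v a) (v b) dom_l) ?(@dominant_ltn l (w a) (w b) dom_l) ?E.
Qed.

Lemma minrep_canon l w : dominant l -> minrep l w <-> canon l w.
Proof.
move=> dom_l; rewrite canonE -cards_eq0.
have cardE v : (forall i, l (v i) = l (w i)) ->
    ninv v = #|inversions w :\: level_pairs l w| + #|inversions v :&: level_pairs l w|.
  by move=> E; rewrite -(inversions_off_level dom_l E) addnC cardsID.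
split=> [min_w | no_level v /in_rcosetP E]; last first.
  by apply/len_leP; rewrite (cardE v E) (cardE w (fun=> erefl)) (eqP no_level) addn0 leq_addr.
have [w0 canon_w0 E] := canon_exists l w.
have level0 : level_pairs l w0 = level_pairs l w by apply/setP => p; rewrite !inE !E.
move: canon_w0; rewrite canonE -cards_eq0 level0 => /eqP canon_w0.
have /len_leP := min_w w0 (proj2 (in_rcosetP _ _ _) E).
by rewrite (cardE w0 E) (cardE w (fun=> erefl)) canon_w0 leq_add2l leqn0.
Qed.

End MinimalRepresentatives.

(** * Rearrangements and the count of chi *)

Section Rearrangements.
Variable k : nat.
Implicit Types (f g : 'I_k -> nat) (w : {perm 'I_k}).

Definition conjf f i := #|[set j | i <= f j]|.

Definition rearr f g := perm_eq [seq f j | j <- enum 'I_k] [seq g j | j <- enum 'I_k].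

Lemma conjf_count f i : conjf f i = count (leq i) [seq f j | j <- enum 'I_k].
Proof. by rewrite /conjf card_set_count count_map. Qed.

Lemma conjf0 f : conjf f 0 = k.
Proof. by rewrite /conjf -[RHS]card_ord; apply: eq_card => j; rewrite inE. Qed.

Lemma conjf_subn1 f i : 0 < i -> conjf (fun j => f j - 1) i = conjf f i.+1.
Proof. by move=> i_gt0; apply: eq_card => j; rewrite !inE; lia. Qed.

Lemma conjf_perm f w i : conjf (fun j => f (w j)) i = conjf f i.
Proof.
rewrite /conjf -(card_preimset [set j | i <= f j] (@perm_inj _ w)).
by apply: eq_card => j; rewrite !inE.
Qed.

Lemma rearrP f g : reflect (forall i, conjf f i = conjf g i) (rearr f g).
Proof.
apply: (iffP idP) => [/seq.permP E i | E]; first by rewrite !conjf_count E.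
apply/allP => x _; apply/eqP.
by have := E x; have := E x.+1; rewrite !conjf_count !(count_leq_split x); lia.
Qed.

Lemma eq_rearr f1 f2 g : f1 =1 f2 -> rearr f1 g = rearr f2 g.
Proof. by move=> E; rewrite /rearr (eq_map E). Qed.

Lemma rearr_comp f w : rearr (fun j => f (w j)) f.
Proof. by apply/rearrP => i; apply: conjf_perm. Qed.

Lemma rearr_perm f g : rearr f g -> exists p : {perm 'I_k}, forall j, f j = g (p j).
Proof.
rewrite /rearr (_ : [seq g j | j <- enum 'I_k] = [tuple g j | j < k]) //.
case/tuple_permP => p /eq_in_map fE; exists p => j.
by have := fE j (mem_enum _ j); rewrite tnth_mktuple.
Qed.

Lemma rearr_subn1 f g :
  rearr f g = rearr (fun j => f j - 1) (fun j => g j - 1) && (conjf f 1 == conjf g 1).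
Proof.
apply/rearrP/andP => [E | [/rearrP E1 /eqP E2] [|[|i]]]; rewrite ?conjf0 //.
  split; last by rewrite E.
  by apply/rearrP => -[|i]; rewrite ?conjf0 // !conjf_subn1.
by have := E1 i.+1; rewrite !conjf_subn1.
Qed.

End Rearrangements.

Section BoundedRearrangements.
Variables k c : nat.
Local Notation bvec := {ffun 'I_k -> 'I_c.+1}.
Implicit Types (lam mu : 'I_k -> nat) (a t : bvec) (S : {set 'I_k}).

Definition bounded_rearr lam mu : {set bvec} :=
  [set a : bvec | [forall j, a j <= lam j] && rearr (fun j => a j) mu].

Definition decf a : bvec := [ffun j => inord (a j - 1)].

Definition incf t S : bvec := [ffun j => inord (t j + (j \in S))].

Definition supp a := [set j | 0 < a j].

Lemma decfE a j : decf a j = a j - 1 :> nat.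
Proof. by rewrite ffunE inordK // ltnS; have := ltn_ord (a j); lia. Qed.

Lemma decf_suppE a j : a j = decf a j + (j \in supp a) :> nat.
Proof. by rewrite decfE inE; case: posnP => /=; lia. Qed.

Section Fiber.
Variables lam mu : 'I_k -> nat.
Hypothesis lam_c : forall j, lam j <= c.
Local Notation lam1 := (fun j => lam j - 1).
Local Notation mu1 := (fun j => mu j - 1).

Lemma decf_bounded_rearr a :
  a \in bounded_rearr lam mu -> decf a \in bounded_rearr lam1 mu1.
Proof.
rewrite !inE rearr_subn1 => /andP[/forallP a_lam /andP[a_mu _]].
apply/andP; split; first by apply/forallP => j; rewrite decfE; have := a_lam j; lia.
by rewrite (eq_rearr _ (decfE a)).
Qed.

Section Lift.
Variables (t : bvec) (S : {set 'I_k}).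
Hypotheses (t_lam : forall j, t j <= lam j - 1) (supp_t_S : supp t \subset S)
           (S_lam : S \subset [set j | 0 < lam j]).

Let t_out j : j \notin S -> t j = 0 :> nat.
Proof.
move=> jS; apply/eqP; rewrite -leqn0 leqNgt; apply: contra jS => t_pos.
by apply: (subsetP supp_t_S); rewrite inE.
Qed.

Lemma incfE j : incf t S j = t j + (j \in S) :> nat.
Proof.
rewrite ffunE inordK //; case: (boolP (j \in S)) => [/(subsetP S_lam)|/t_out ->] //.
by rewrite inE => lam_pos; have := t_lam j; have := lam_c j; lia.
Qed.

Lemma decf_incf : decf (incf t S) = t.
Proof.
apply/ffunP => j; apply/val_inj; rewrite /= decfE incfE.
by case: (boolP (j \in S)) => [_|/t_out ->] /=; lia.
Qed.

Lemma supp_incf : supp (incf t S) = S.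
Proof.
by apply/setP => j; rewrite inE incfE; case: (boolP (j \in S)) => [|/t_out ->] /=; lia.
Qed.

Lemma incf_bounded_rearr : rearr (fun j => t j) mu1 -> #|S| = conjf mu 1 ->
  incf t S \in bounded_rearr lam mu.
Proof.
move=> t_mu card_S; rewrite inE rearr_subn1; apply/and3P; split.
- apply/forallP => j; rewrite incfE.
  case: (boolP (j \in S)) => [/(subsetP S_lam)|/t_out ->] //.
  by rewrite inE => lam_pos; have := t_lam j; lia.
- by rewrite -(eq_rearr _ (decfE _)) decf_incf.
- by apply/eqP; rewrite -card_S -[in RHS]supp_incf.
Qed.

End Lift.

(* a is determined by decf a and supp a, and the supports occurring over t are
   the sets of size mu'_1 between supp t and {j | 0 < lam j}. *)
Lemma card_decf_fiber t : t \in bounded_rearr lam1 mu1 ->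
  #|[set a in bounded_rearr lam mu | decf a == t]| =
  'C(conjf lam 1 - conjf mu 2, conjf mu 1 - conjf mu 2).
Proof.
rewrite inE => /andP[/forallP t_lam t_mu].
set L := [set j | 0 < lam j].
have supp_t_L : supp t \subset L by apply/subsetP => j; rewrite !inE; have := t_lam j; lia.
have card_supp_t : #|supp t| = conjf mu 2 by rewrite -conjf_subn1 // -(rearrP _ _ t_mu).
have le_supp_t : #|supp t| <= conjf mu 1.
  by rewrite card_supp_t; apply/subset_leq_card/subsetP => j; rewrite !inE; apply: ltnW.
rewrite -card_supp_t -[conjf lam 1]/#|L| -(card_subsets_between supp_t_L le_supp_t).
rewrite -(@card_in_imset _ _ supp) => [|a1 a2]; last first.
  rewrite !inE => /andP[_ /eqP d1] /andP[_ /eqP d2] s12; apply/ffunP => j; apply/val_inj.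
  by rewrite /= decf_suppE [RHS]decf_suppE d1 d2 s12.
apply: eq_card => S; rewrite inE; apply/imsetP/and3P => [[a] | [tS SL /eqP cS]].
  rewrite !inE rearr_subn1 => /andP[/andP[/forallP a_lam /andP[_ /eqP a_mu]] /eqP <-] ->.
  split.
  - by apply/subsetP => j; rewrite !inE decfE; lia.
  - by apply/subsetP => j; rewrite !inE; have := a_lam j; lia.
  - by rewrite -a_mu.
exists (incf t S); last by rewrite supp_incf.
by rewrite inE decf_incf // eqxx andbT; apply: incf_bounded_rearr.
Qed.

End Fiber.

Lemma card_bounded_rearr b lam mu :
  (forall j, lam j <= b) -> (forall j, lam j <= c) -> (forall j, mu j <= lam j) ->
  #|bounded_rearr lam mu| =
  \prod_(1 <= i < b.+1) 'C(conjf lam i - conjf mu i.+1, conjf mu i - conjf mu i.+1).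
Proof.
elim: b lam mu => [|b IH] lam mu lam_b lam_c mu_lam.
  have lam0 j : lam j = 0 by apply/eqP; rewrite -leqn0.
  rewrite big_geq // -(cards1 ([ffun=> ord0] : bvec)); apply: eq_card => a; rewrite !inE.
  apply/andP/eqP => [[/forallP a_lam _] | ->].
    by apply/ffunP => j; apply/val_inj; rewrite ffunE /=; have := a_lam j; rewrite lam0; lia.
  split; first by apply/forallP => j; rewrite ffunE.
  rewrite (eq_rearr (f2 := mu) mu) => [|j]; first exact: perm_refl.
  by rewrite ffunE /=; have := mu_lam j; rewrite lam0; lia.
have lam1_b j : lam j - 1 <= b by have := lam_b j; lia.
have lam1_c j : lam j - 1 <= c by have := lam_c j; lia.
have mu1_lam1 j : mu j - 1 <= lam j - 1 by have := mu_lam j; lia.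
rewrite big_ltn // big_add1 /=.
have := IH _ _ lam1_b lam1_c mu1_lam1.
under eq_big_nat => i /andP[i_pos _] do rewrite !conjf_subn1 //.
move=> <-; rewrite -[#|bounded_rearr lam mu|]sum1_card.
set B1 := bounded_rearr (fun j => lam j - 1) _.
rewrite (partition_big (@decf) (mem B1)) => [|a]; last exact: decf_bounded_rearr.
rewrite mulnC -sum_nat_const; apply: eq_bigr => t t_in.
by rewrite -(card_decf_fiber lam_c t_in) -sum1_card; apply: eq_bigl => a; rewrite !inE.
Qed.

End BoundedRearrangements.

Section SkewCount.
Variable k : nat.
Implicit Types (l m : vec k) (w : {perm 'I_k}).

Lemma card_ord_ltn n : n <= k -> #|[set j : 'I_k | j < n]| = n.
Proof.
move=> n_k; have widen_inj : injective (widen_ord n_k) by move=> i j [] /val_inj.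
rewrite -[in RHS](card_ord n) -(card_imset _ widen_inj); apply: eq_card => j; rewrite inE.
apply/idP/imsetP => [j_n | [i _ ->] /=]; last exact: ltn_ord.
by exists (Ordinal j_n) => //; apply: val_inj.
Qed.

Lemma subpart_of_conjf l m : dominant l -> dominant m ->
  (forall i, conjf m i <= conjf l i) -> subpart m l.
Proof.
move=> dom_l dom_m conj_ml; apply/forallP => j; rewrite leqNgt; apply/negP => l_lt_m.
have := conj_ml (l j).+1.
have m_big : j.+1 <= conjf m (l j).+1.
  rewrite -(card_ord_ltn (ltn_ord j)); apply/subset_leq_card/subsetP => i.
  by rewrite !inE ltnS => i_j; apply: leq_trans l_lt_m (dom_m _ _ i_j).
have l_small : conjf l (l j).+1 <= j.
  rewrite -[X in _ <= X](card_ord_ltn (ltnW (ltn_ord j))); apply/subset_leq_card/subsetP => i.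
  by rewrite !inE => l_ji; rewrite ltnNge; apply/negP => /dom_l; rewrite leqNgt l_ji.
lia.
Qed.

Definition canon_below l m : {set {perm 'I_k}} :=
  [set w | canon m w && [forall i, m (w i) <= l i]].

Lemma card_canon_below l m : subpart m l ->
  #|canon_below l m| =
  \prod_(1 <= i < (\max_j l j).+1) 'C(conjf l i - conjf m i.+1, conjf m i - conjf m i.+1).
Proof.
move=> /forallP m_l; set B := \max_(j : 'I_k) l j.
have l_B j : l j <= B by apply: leq_bigmax.
rewrite -(@card_bounded_rearr k B B) //.
pose phi w : {ffun 'I_k -> 'I_B.+1} := [ffun j => inord (m (w j))].
have phiE w : w \in canon_below l m -> forall j, phi w j = m (w j) :> nat.
  rewrite inE => /andP[_ /forallP w_l] j.
  by rewrite ffunE inordK // ltnS; apply: leq_trans (w_l j) (l_B j).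
rewrite -(@card_in_imset _ _ phi) => [|w1 w2 w1_in w2_in /ffunP phi12]; last first.
  move: (w1_in) (w2_in); rewrite !inE => /andP[c1 _] /andP[c2 _].
  by apply: (canon_uniq c1 c2) => i; rewrite -!phiE // phi12.
apply: eq_card => a; rewrite inE; apply/imsetP/idP => [[w w_in ->] | ].
  apply/andP; split; last by rewrite (eq_rearr _ (phiE _ w_in)) rearr_comp.
  by apply/forallP => j; rewrite phiE //; move: w_in; rewrite inE => /andP[_ /forallP].
move=> /andP[/forallP a_l /rearr_perm[p a_p]].
have [w canon_w w_p] := canon_exists m p.
have w_in : w \in canon_below l m.
  by rewrite inE canon_w; apply/forallP => i; rewrite w_p -a_p.
by exists w => //; apply/ffunP => j; apply/val_inj => /=; rewrite phiE // w_p -a_p.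
Qed.

Lemma chi_count l m : dominant l -> dominant m ->
  card_is (fun w => minrep m w /\ forall i, m (w i) <= l i) (chi l m).
Proof.
move=> dom_l dom_m; exists (canon_below l m); split.
  move=> w; rewrite inE; split=> [/andP[canon_w /forallP w_l] | [min_w w_l]].
    by split=> //; apply/(minrep_canon _ dom_m).
  by apply/andP; split; [apply/(minrep_canon _ dom_m) | apply/forallP].
rewrite /chi; case: ifP => [m_l | /negbT m_l]; first exact: card_canon_below.
apply: eq_card0 => w; rewrite inE; apply/negP => /andP[_ /forallP w_l].
move/negP: m_l; apply; apply: subpart_of_conjf => // i.
rewrite -(conjf_perm m w); apply/subset_leq_card/subsetP => j; rewrite !inE => i_m.
exact: leq_trans i_m (w_l j).
Qed.

End SkewCount.

(** * Products of monomial symmetric polynomials *)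

Lemma mcoeff_sumX_mul (R : comRingType) n (s t : seq 'X_{1..n}) z :
  (((\sum_(x <- s) 'X_[x]) * (\sum_(y <- t) 'X_[y])) @_ z =
   \sum_(x <- s) \sum_(y <- t) ((x + y)%MM == z)%:R :> R)%R.
Proof.
rewrite big_distrlr raddf_sum; apply: eq_bigr => x _.
by rewrite raddf_sum; apply: eq_bigr => y _; rewrite /= -mpolyXD mcoeffX.
Qed.

Section PaddedMonomials.
Variables (k n : nat).
Hypothesis k_n : k <= n.
Implicit Types (l m v : vec k) (w : {perm 'I_k}) (x y : 'X_{1..n}).

Definition rearr_mnms (a : 'I_n -> nat) : seq 'X_{1..n} :=
  undup [seq [multinom a (s i) | i < n] | s : {perm 'I_n} <- enum {perm 'I_n}].

Definition pad_mnm l w : 'X_{1..n} := [multinom pad n (actv l w) i | i < n].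

Lemma msymmE (a : 'I_n -> nat) : msymm a = (\sum_(x <- rearr_mnms a) 'X_[x])%R.
Proof. by []. Qed.

Lemma mem_rearr_mnms (a : 'I_n -> nat) x :
  (x \in rearr_mnms a) = perm_eq x [tuple a i | i < n].
Proof.
rewrite mem_undup; apply/mapP/tuple_permP => [[s _ ->] | [s x_s]].
  by exists s; apply: eq_map => i; rewrite tnth_mktuple.
exists s; first by rewrite mem_enum.
have x_val : val x = [tuple tnth [tuple a i | i < n] (s j) | j < n] by apply: val_inj.
by apply/mnmP => i; rewrite mnmE mnm_tnth x_val !tnth_mktuple.
Qed.

Lemma pad_widen (f : vec k) j : pad n f (widen_ord k_n j) = f j.
Proof.
by rewrite /pad (insubT (fun i => i < k) (ltn_ord j)) /=; congr (f _); apply: val_inj.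
Qed.

Lemma pad_out (f : vec k) (i : 'I_n) : k <= i -> pad n f i = 0.
Proof. by move=> k_i; rewrite /pad insubN // -leqNgt. Qed.

Lemma map_pad (f : vec k) :
  [seq pad n f i | i <- enum 'I_n] = [seq f j | j <- enum 'I_k] ++ nseq (n - k) 0.
Proof.
pose g i := oapp f 0 (insub i : option 'I_k).
rewrite (_ : [seq pad n f i | i <- enum 'I_n] = map g (map val (enum 'I_n))); last first.
  by rewrite -map_comp.
rewrite val_enum_ord -(subnKC k_n) iotaD map_cat add0n subnKC //; congr (_ ++ _).
  by rewrite -val_enum_ord -map_comp; apply: eq_map => j; rewrite /g /= valK.
rewrite -[in nseq _ _](size_iota k (n - k)) -(size_map g).
apply/all_pred1P/allP => y /mapP[i]; rewrite mem_iota => /andP[k_i _] ->.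
by rewrite /g insubN // -leqNgt.
Qed.

Lemma pad_mnm_rearr l w : pad_mnm l w \in rearr_mnms (pad n l).
Proof.
rewrite mem_rearr_mnms /= !map_pad perm_cat2r.
have -> : [seq actv l w j | j <- enum 'I_k] = [seq l j | j <- [seq w j | j <- enum 'I_k]].
  by elim: (enum _) => //= j s ->; rewrite ffunE.
apply/perm_map/uniq_perm; first by rewrite map_inj_uniq ?enum_uniq //; apply: perm_inj.
  exact: enum_uniq.
by move=> j; rewrite mem_enum -[j](permKV w) map_f ?mem_enum.
Qed.

Lemma pad_mnm_inj l (w1 w2 : {perm 'I_k}) :
  pad_mnm l w1 = pad_mnm l w2 -> forall j, l (w1 j) = l (w2 j).
Proof. by move/mnmP => E j; have := E (widen_ord k_n j); rewrite !mnmE !pad_widen !ffunE. Qed.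

Lemma rearr_mnms_pad l x : x \in rearr_mnms (pad n l) ->
  (forall i : 'I_n, k <= i -> x i = 0) -> exists2 w, canon l w & x = pad_mnm l w.
Proof.
move=> x_in x_out; pose xk : vec k := [ffun j => x (widen_ord k_n j)].
have x_pad i : x i = pad n xk i.
  case: (ltnP i k) => [i_k | k_i]; last by rewrite pad_out ?x_out.
  by rewrite (_ : i = widen_ord k_n (Ordinal i_k)) ?pad_widen ?ffunE //; apply: val_inj.
have xE : (x : seq nat) = [seq pad n xk i | i <- enum 'I_n].
  by rewrite -[LHS](map_tnth_enum x); apply: eq_map => i /=; rewrite -mnm_tnth x_pad.
move: x_in; rewrite mem_rearr_mnms /perm_eq xE /= !map_pad -/(perm_eq _ _) perm_cat2r.
case/(rearr_perm (f := xk) (g := l)) => p xk_p.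
have [w canon_w w_p] := canon_exists l p.
exists w => //; apply/mnmP => i; rewrite mnmE x_pad; congr (pad n _ i).
by apply/ffunP => j; rewrite [RHS]ffunE w_p -xk_p.
Qed.

Lemma big_rearr_mnms_pad (R : nmodType) l (F : 'X_{1..n} -> R) :
  (forall x, F x != 0%R -> forall i : 'I_n, k <= i -> x i = 0) ->
  (\sum_(x <- rearr_mnms (pad n l)) F x = \sum_(w in [set w | canon l w]) F (pad_mnm l w))%R.
Proof.
move=> F_low; set G := [seq pad_mnm l w | w <- enum [set w | canon l w]].
have out_G x : x \notin G -> x \in rearr_mnms (pad n l) -> F x = 0%R.
  move=> x_nG x_in; apply/eqP/negPn/negP => /F_low/(rearr_mnms_pad x_in)[w canon_w x_w].
  by move/negP: x_nG; apply; rewrite x_w map_f // mem_enum inE.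
rewrite (bigID (mem G)) /= [X in (_ + X)%R]big1_seq => [|x /andP[/out_G]] //.
rewrite addr0 -big_filter (perm_big G) ?big_map ?big_enum //; apply: uniq_perm.
- by rewrite filter_uniq ?undup_uniq.
- rewrite map_inj_in_uniq ?enum_uniq // => v w; rewrite !mem_enum !inE => canon_v canon_w.
  by move/pad_mnm_inj; apply: canon_uniq.
- by move=> x; rewrite mem_filter andb_idr // => /mapP[w _ ->]; apply: pad_mnm_rearr.
Qed.

Lemma fcoefE l m v :
  fcoef n l m v = #|[set p : {perm 'I_k} * {perm 'I_k} |
    [&& canon l p.1, canon m p.2 & [forall i, l (p.1 i) + m (p.2 i) == v i]]]|.
Proof.
set A := [set p | _]; set mv := [multinom pad n v i | i < n].
have off_mv x y (i : 'I_n) : k <= i -> (x i != 0) || (y i != 0) -> ((x + y)%MM == mv) = false.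
  move=> k_i nz; apply/negbTE/eqP => /mnmP/(_ i).
  by rewrite mnmDE mnmE pad_out //; move: nz; case: eqP; case: eqP => //=; lia.
have sum_mv w w' :
    ((pad_mnm l w + pad_mnm m w')%MM == mv) = [forall i, l (w i) + m (w' i) == v i].
  apply/eqP/forallP => [/mnmP E i | E].
    by have := E (widen_ord k_n i); rewrite mnmDE !mnmE !pad_widen !ffunE => ->.
  apply/mnmP => i; rewrite mnmDE !mnmE.
  case: (ltnP i k) => [i_k | k_i]; last by rewrite !pad_out.
  rewrite (_ : i = widen_ord k_n (Ordinal i_k)) ?pad_widen ?ffunE; last exact: val_inj.
  exact/eqP/E.
rewrite /fcoef !msymmE mcoeff_sumX_mul big_rearr_mnms_pad => [|x Fx i k_i]; last first.
  apply/eqP; apply: contraNT Fx => x_i.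
  by rewrite big1_seq // => y _; rewrite (off_mv _ _ i) ?x_i.
rewrite (eq_bigr (fun w => \sum_(w' in [set w | canon m w])
    ((pad_mnm l w + pad_mnm m w')%MM == mv)%:R))%R => [|w _]; last first.
  apply: big_rearr_mnms_pad => y Fy i k_i; apply/eqP; apply: contraNT Fy => y_i.
  by rewrite (off_mv _ _ i) ?y_i ?orbT.
rewrite pair_big (eq_bigr (fun p => ((p \in A) : nat)%:R : int))%R => [|p]; last first.
  by rewrite !inE => /andP[-> ->]; rewrite sum_mv.
rewrite -natr_sum natz -sum1_card big_mkcond /=; congr Posz.
rewrite [RHS]big_mkcond; apply: eq_bigr => p _; rewrite !inE.
by case: (canon l p.1); case: (canon m p.2); case: [forall i, _].
Qed.

Lemma fcoef_count l m v : dominant l -> dominant m ->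
  exists c, card_is (fun p : {perm 'I_k} * {perm 'I_k} =>
                       [/\ minrep l p.1, minrep m p.2 &
                           forall i, actv l p.1 i + actv m p.2 i = v i]) c
            /\ fcoef n l m v = Posz c.
Proof.
move=> dom_l dom_m; eexists; split; last exact: fcoefE.
eexists; split => [[w w'] | //]; rewrite inE /=.
split=> [/and3P[canon_w canon_w' /forallP E] | [min_w min_w' E]].
  split; [exact/(minrep_canon _ dom_l) | exact/(minrep_canon _ dom_m) |].
  by move=> i; rewrite !ffunE; apply/eqP.
apply/and3P; split; [exact/(minrep_canon _ dom_l) | exact/(minrep_canon _ dom_m) |].
by apply/forallP => i; rewrite -E !ffunE.
Qed.

End PaddedMonomials.

Theorem mainTheorem7 (k : nat) (l m v : {ffun 'I_k -> nat}) :
  dominant l -> dominant m -> dominant v ->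
  (forall n : nat, (k <= n)%N ->
     exists c : nat,
       card_is (fun p : {perm 'I_k} * {perm 'I_k} =>
                  [/\ minrep l p.1, minrep m p.2 &
                      forall i, actv l p.1 i + actv m p.2 i = v i])%N c
       /\ fcoef n l m v = Posz c)
  /\
  card_is (fun w : {perm 'I_k} => minrep m w /\ forall i, (m (w i) <= l i)%N)
          (chi l m).
Proof.
move=> dom_l dom_m _; split; last exact: chi_count.
by move=> n k_n; apply: fcoef_count.
Qed.
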